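(* There exists a constant $\eta>0$ such that for all lines $H_1,H_2\in\mathcal H$ (in general position) and every $R>0$, $$G(H_1,H_2):=\int_{\mathcal H}\mathbf 1\{c(H_1,H_2,H_3)\in B(0,R)\}\,\Lambda(\mathrm dH_3)\le \eta R.$$
   Context: $\mathcal H$ is the set of lines in $\mathbb{R}^2$, and $\Lambda$ is the translation- and rotation-invariant measure on $\mathcal H$ normalized so that the lines meeting the unit disk have measure $2$; equivalently $\int_{\mathcal H}f(H)\Lambda(\mathrm dH)=\int_{S^1}\int_0^\infty f(H(r,u))\,\mathrm dr\,\sigma(\mathrm du)$, where $H(r,u)$ is the line at distance $r$ from the origin with unit normal $u$, and $\sigma$ is the rotation-invariant measure on $S^1$ with $\sigma(S^1)=2$. For three lines in general position, $c(H_1,H_2,H_3)$ is the incenter of the unique triangle formed by them. $B(0,R)$ is the closed disk of radius $R$ centered at the origin. *)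

From Stdlib Require Import Reals Lra.
Open Scope R_scope.

(* A line {(x,y) | a x + b y = c} with (a,b) <> (0,0). *)
Record line := mkLine { la : R; lb : R; lc : R }.
Definition is_line (L : line) : Prop := la L <> 0 \/ lb L <> 0.

Definition on_line (L : line) (p : R * R) : Prop :=
  la L * fst p + lb L * snd p = lc L.

(* The line H(r,u) at distance r >= 0 from the origin with unit normal
   u = (cos t, sin t). *)
Definition Hline (r t : R) : line := mkLine (cos t) (sin t) r.

Definition det2 (L1 L2 : line) : R := la L1 * lb L2 - la L2 * lb L1.
Definition not_parallel (L1 L2 : line) : Prop := det2 L1 L2 <> 0.

(* Intersection point of two non-parallel lines (Cramer's rule). *)
Definition inter (L1 L2 : line) : R * R :=
  ((lc L1 * lb L2 - lc L2 * lb L1) / det2 L1 L2,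
   (la L1 * lc L2 - la L2 * lc L1) / det2 L1 L2).

Definition general_position3 (L1 L2 L3 : line) : Prop :=
  is_line L1 /\ is_line L2 /\ is_line L3 /\
  not_parallel L1 L2 /\ not_parallel L1 L3 /\ not_parallel L2 L3 /\
  ~ on_line L3 (inter L1 L2).

Definition dist (p q : R * R) : R :=
  sqrt ((fst p - fst q) ^ 2 + (snd p - snd q) ^ 2).

(* Incenter of the triangle with vertices A = L2∩L3, B = L1∩L3, C = L1∩L2,
   via the standard formula (a A + b B + c C)/(a+b+c), a,b,c the lengths
   of the opposite sides. *)
Definition incenter (L1 L2 L3 : line) : R * R :=
  let A := inter L2 L3 in
  let B := inter L1 L3 in
  let C := inter L1 L2 in
  let a := dist B C in
  let b := dist A C in
  let c := dist A B in
  let s := a + b + c in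
  ((a * fst A + b * fst B + c * fst C) / s,
   (a * snd A + b * snd B + c * snd C) / s).

Definition in_ball (R0 : R) (p : R * R) : Prop :=
  fst p ^ 2 + snd p ^ 2 <= R0 ^ 2.

(* Lebesgue outer measure on the (r,t)-parameter plane, via countable
   covers by closed rectangles [a,b] x [c,d]. *)
Record rect := mkRect { ra : R; rb : R; rc : R; rd : R }.
Definition rect_area (Q : rect) : R :=
  Rmax 0 (rb Q - ra Q) * Rmax 0 (rd Q - rc Q).
Definition in_rect (Q : rect) (r t : R) : Prop :=
  ra Q <= r <= rb Q /\ rc Q <= t <= rd Q.

Definition outer_measure_le (S : R -> R -> Prop) (m : R) : Prop :=
  forall eps, 0 < eps ->
  exists Q : nat -> rect,
    (forall r t, S r t -> exists k, in_rect (Q k) r t) /\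
    (forall n, sum_f_R0 (fun k => rect_area (Q k)) n <= m + eps).

Definition G_set (H1 H2 : line) (R0 : R) (r t : R) : Prop :=
  0 <= r /\ 0 <= t < 2 * PI /\
  general_position3 H1 H2 (Hline r t) /\
  in_ball R0 (incenter H1 H2 (Hline r t)).

(* Λ(dH) = dr σ(du) with σ(du) = dt/π (σ(S^1) = 2), so
   G(H1,H2) = (1/π) * Leb_2(G_set).  "G(H1,H2) <= m" is stated as
   Leb_2(G_set) <= π m. *)
Definition G_le (H1 H2 : line) (R0 m : R) : Prop :=
  outer_measure_le (G_set H1 H2 R0) (PI * m).

(* The proof rests on one classical fact: the incenter is at the same
   distance ρ from each of the three sides.  We derive it from the formula
   "side length × height = |twice the signed area|" applied to the sides on
   H1 and on H3, using that twice the area is affine in the barycentric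
   weights of the incenter.  Next, the distance to a fixed line is
   1-Lipschitz, so a point of B(0,R) is at distance ρ from H1 only if ρ lies
   within R of d0 = dist(0, H1); similarly ρ = dist(I, H(r,u)) lies within R
   of dist(0, H(r,u)) = r.  Hence every admissible parameter (r, t) lies in
   the rectangle [d0 - 2R, d0 + 2R] × [0, 2π] of area 8πR, and a single
   rectangle is a cover witnessing the outer-measure bound. *)
From Pilot Require Import Defs.
From Stdlib Require Import Reals Lra.
Open Scope R_scope.

Definition lform (L : line) (p : R * R) : R :=
  la L * fst p + lb L * snd p - lc L.

Definition nsq (L : line) : R := la L ^ 2 + lb L ^ 2.

Definition line_dist (L : line) (p : R * R) : R :=
  Rabs (lform L p) / sqrt (nsq L).

(* Twice the signed area of the triangle p q x. *)
Definition cross (p q x : R * R) : R :=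
  (fst q - fst p) * (snd x - snd p) - (snd q - snd p) * (fst x - fst p).

Lemma nsq_pos (L : line) : is_line L -> 0 < nsq L.
Proof. unfold nsq; intros [H | H]; nra. Qed.

Lemma inter_on_l (L1 L2 : line) : not_parallel L1 L2 -> on_line L1 (inter L1 L2).
Proof.
  unfold not_parallel, on_line, inter, det2; destruct L1, L2; simpl.
  intros; field; assumption.
Qed.

Lemma inter_on_r (L1 L2 : line) : not_parallel L1 L2 -> on_line L2 (inter L1 L2).
Proof.
  unfold not_parallel, on_line, inter, det2; destruct L1, L2; simpl.
  intros; field; assumption.
Qed.

Lemma inter_unique (L1 L2 : line) (p : R * R) :
  not_parallel L1 L2 -> on_line L1 p -> on_line L2 p -> p = inter L1 L2.
Proof.
  destruct L1 as [a1 b1 c1], L2 as [a2 b2 c2], p as [x y].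
  unfold not_parallel, on_line, inter, det2; simpl; intros Hdet H1 H2.
  subst c1 c2; f_equal; field; assumption.
Qed.

Lemma cross_barycenter (p q A B C : R * R) (a b c : R) :
  a + b + c <> 0 ->
  cross p q ((a * fst A + b * fst B + c * fst C) / (a + b + c),
             (a * snd A + b * snd B + c * snd C) / (a + b + c))
  = (a * cross p q A + b * cross p q B + c * cross p q C) / (a + b + c).
Proof. intros Hs; unfold cross; simpl; field; assumption. Qed.

Lemma perp_lagrange (a b u v X Y : R) :
  0 < a ^ 2 + b ^ 2 -> a * u + b * v = 0 ->
  (u ^ 2 + v ^ 2) * (a * X + b * Y) ^ 2 = (u * Y - v * X) ^ 2 * (a ^ 2 + b ^ 2).
Proof.
  intros Hn Hperp.
  set (k := a * v - b * u).
  assert (Hcross : (a ^ 2 + b ^ 2) * (u * Y - v * X) = - k * (a * X + b * Y)).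
  { replace ((a ^ 2 + b ^ 2) * (u * Y - v * X))
      with (- k * (a * X + b * Y) + (a * u + b * v) * (a * Y - b * X))
      by (unfold k; ring).
    rewrite Hperp; ring. }
  assert (Hnorm : (a ^ 2 + b ^ 2) * (u ^ 2 + v ^ 2) = k ^ 2).
  { replace ((a ^ 2 + b ^ 2) * (u ^ 2 + v ^ 2))
      with (k ^ 2 + (a * u + b * v) ^ 2) by (unfold k; ring).
    rewrite Hperp; ring. }
  apply (Rmult_eq_reg_l ((a ^ 2 + b ^ 2) ^ 2)); [| nra].
  replace ((a ^ 2 + b ^ 2) ^ 2 * ((u ^ 2 + v ^ 2) * (a * X + b * Y) ^ 2))
    with ((a ^ 2 + b ^ 2) * ((a ^ 2 + b ^ 2) * (u ^ 2 + v ^ 2)) * (a * X + b * Y) ^ 2)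
    by ring.
  replace ((a ^ 2 + b ^ 2) ^ 2 * ((u * Y - v * X) ^ 2 * (a ^ 2 + b ^ 2)))
    with ((a ^ 2 + b ^ 2) * ((a ^ 2 + b ^ 2) * (u * Y - v * X)) ^ 2) by ring.
  rewrite Hnorm, Hcross; ring.
Qed.

(* Side length times height equals |twice the area|, for a side [p, q]
   lying on the line L: both sides are square roots of equal quantities. *)
Lemma side_times_height (L : line) (p q x : R * R) :
  is_line L -> on_line L p -> on_line L q ->
  Defs.dist p q * line_dist L x = Rabs (cross p q x).
Proof.
  intros HL Hp Hq.
  pose proof (nsq_pos L HL) as HN.
  set (D := (fst p - fst q) ^ 2 + (snd p - snd q) ^ 2).
  assert (HD : 0 <= D)
    by (unfold D; pose proof (pow2_ge_0 (fst p - fst q));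
        pose proof (pow2_ge_0 (snd p - snd q)); lra).
  unfold Defs.dist, line_dist; fold D.
  rewrite <- !sqrt_Rsqr_abs, <- sqrt_div_alt, <- sqrt_mult_alt by lra.
  f_equal; unfold Rsqr.
  apply (Rmult_eq_reg_r (nsq L)); [| lra].
  replace (D * (lform L x * lform L x / nsq L) * nsq L) with (D * lform L x ^ 2)
    by (field; lra).
  unfold D, on_line, lform, nsq, cross in *.
  destruct L as [a b c], p as [px py], q as [qx qy], x as [x y]; simpl in *.
  subst c.
  assert (Hdir : a * (qx - px) + b * (qy - py) = 0) by lra.
  pose proof (perp_lagrange a b (qx - px) (qy - py) (x - px) (y - py) HN Hdir).
  lra.
Qed.

Lemma Rabs_scaled (w z s : R) : 0 <= w -> 0 < s -> Rabs (w * z / s) = w * (Rabs z / s).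
Proof.
  intros Hw Hs; unfold Rdiv.
  rewrite !Rabs_mult, (Rabs_pos_eq w), (Rabs_pos_eq (/ s))
    by (auto; left; apply Rinv_0_lt_compat; lra).
  ring.
Qed.

Lemma dist_pos (p q : R * R) : p <> q -> 0 < Defs.dist p q.
Proof.
  destruct p as [px py], q as [qx qy]; intros Hpq; unfold Defs.dist; simpl.
  apply sqrt_lt_R0.
  destruct (Req_dec px qx), (Req_dec py qy); subst; [congruence | nra | nra | nra].
Qed.

Lemma incenter_equidistant (L1 L2 L3 : line) :
  general_position3 L1 L2 L3 ->
  line_dist L1 (incenter L1 L2 L3) = line_dist L3 (incenter L1 L2 L3).
Proof.
  intros (HL1 & _ & HL3 & P12 & P13 & P23 & Hnc).
  unfold incenter; cbv zeta.
  set (A := inter L2 L3) in *; set (B := inter L1 L3) in *; set (C := inter L1 L2) in *.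
  set (a := Defs.dist B C); set (b := Defs.dist A C); set (c := Defs.dist A B).
  assert (HB1 : on_line L1 B) by exact (inter_on_l _ _ P13).
  assert (HB3 : on_line L3 B) by exact (inter_on_r _ _ P13).
  assert (HC1 : on_line L1 C) by exact (inter_on_l _ _ P12).
  assert (HA2 : on_line L2 A) by exact (inter_on_l _ _ P23).
  assert (HA3 : on_line L3 A) by exact (inter_on_r _ _ P23).
  (* A vertex on the third line would make the three lines concurrent. *)
  assert (HBC : B <> C) by (intros E; apply Hnc; rewrite <- E; exact HB3).
  assert (HAB : A <> B).
  { intros E; apply Hnc.
    assert (HAC : A = C).
    { apply inter_unique; [exact P12 | rewrite E; exact HB1 | exact HA2]. }
    rewrite <- HAC; exact HA3. }
  assert (Ha : 0 < a) by exact (dist_pos _ _ HBC).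
  assert (Hc : 0 < c) by exact (dist_pos _ _ HAB).
  assert (Hb : 0 <= b) by apply sqrt_pos.
  assert (Hs : a + b + c <> 0) by lra.
  set (I := ((a * fst A + b * fst B + c * fst C) / (a + b + c),
             (a * snd A + b * snd B + c * snd C) / (a + b + c))).
  (* Both distances equal |twice the area of ABC| / (a + b + c). *)
  set (T := Rabs (cross A B C) / (a + b + c)).
  assert (H1 : a * line_dist L1 I = a * T).
  { unfold a at 1; rewrite (side_times_height L1 B C I HL1 HB1 HC1).
    unfold I; rewrite cross_barycenter by exact Hs.
    replace (a * cross B C A + b * cross B C B + c * cross B C C)
      with (a * cross A B C) by (unfold cross; ring).
    apply Rabs_scaled; lra. }
  assert (H3 : c * line_dist L3 I = c * T).
  { unfold c at 1; rewrite (side_times_height L3 A B I HL3 HA3 HB3).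
    unfold I; rewrite cross_barycenter by exact Hs.
    replace (a * cross A B A + b * cross A B B + c * cross A B C)
      with (c * cross A B C) by (unfold cross; ring).
    apply Rabs_scaled; lra. }
  apply Rmult_eq_reg_l in H1; [| lra].
  apply Rmult_eq_reg_l in H3; [| lra].
  rewrite H1, H3; reflexivity.
Qed.

(* Cauchy–Schwarz: a linear form of a point of B(0,R) is bounded by R
   times the norm of its coefficient vector. *)
Lemma linear_form_ball (a b R0 : R) (p : R * R) :
  0 <= R0 -> in_ball R0 p -> Rabs (a * fst p + b * snd p) <= sqrt (a ^ 2 + b ^ 2) * R0.
Proof.
  unfold in_ball; intros HR Hp.
  assert (Hn : 0 <= a ^ 2 + b ^ 2) by nra.
  assert (Hbound : 0 <= sqrt (a ^ 2 + b ^ 2) * R0)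
    by (apply Rmult_le_pos; [apply sqrt_pos | exact HR]).
  rewrite <- (Rabs_pos_eq _ Hbound).
  apply Rsqr_le_abs_0; unfold Rsqr.
  replace (sqrt (a ^ 2 + b ^ 2) * R0 * (sqrt (a ^ 2 + b ^ 2) * R0))
    with (sqrt (a ^ 2 + b ^ 2) * sqrt (a ^ 2 + b ^ 2) * R0 ^ 2) by ring.
  rewrite sqrt_sqrt by exact Hn.
  pose proof (pow2_ge_0 (a * snd p - b * fst p)).
  nra.
Qed.

(* Distance to a line is 1-Lipschitz: on B(0,R) it stays within R of its
   value at the origin. *)
Lemma line_dist_ball (L : line) (R0 : R) (p : R * R) :
  is_line L -> 0 <= R0 -> in_ball R0 p ->
  Rabs (line_dist L p - line_dist L (0, 0)) <= R0.
Proof.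
  intros HL HR Hp.
  assert (HsN : 0 < sqrt (nsq L)) by (apply sqrt_lt_R0, nsq_pos, HL).
  unfold line_dist; rewrite <- Rdiv_minus_distr.
  unfold Rdiv; rewrite Rabs_mult, Rabs_inv, (Rabs_pos_eq (sqrt _)) by lra.
  apply (Rmult_le_reg_r (sqrt (nsq L))); [exact HsN |].
  rewrite Rmult_assoc, Rinv_l, Rmult_1_r by lra.
  eapply Rle_trans; [apply Rabs_triang_inv2 |].
  replace (lform L p - lform L (0, 0)) with (la L * fst p + lb L * snd p)
    by (unfold lform; simpl; ring).
  rewrite (Rmult_comm R0); exact (linear_form_ball _ _ _ _ HR Hp).
Qed.

Lemma line_dist_Hline (r t : R) (p : R * R) :
  line_dist (Hline r t) p = Rabs (cos t * fst p + sin t * snd p - r).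
Proof.
  unfold line_dist, lform, nsq; simpl.
  replace (cos t * (cos t * 1) + sin t * (sin t * 1)) with 1
    by (pose proof (sin2_cos2 t) as Hpyth; unfold Rsqr in Hpyth; lra).
  rewrite sqrt_1; apply Rdiv_1_r.
Qed.

Lemma G_set_band (H1 H2 : line) (R0 r t : R) :
  is_line H1 -> 0 < R0 -> G_set H1 H2 R0 r t ->
  Rabs (r - line_dist H1 (0, 0)) <= 2 * R0.
Proof.
  intros HL1 HR (Hr & _ & Hgp & Hball).
  pose proof (incenter_equidistant _ _ _ Hgp) as Heq.
  set (I := incenter H1 H2 (Hline r t)) in *.
  assert (HL3 : is_line (Hline r t)) by (destruct Hgp as (_ & _ & H3 & _); exact H3).
  pose proof (line_dist_ball H1 R0 I HL1 (Rlt_le _ _ HR) Hball) as Hd1.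
  pose proof (line_dist_ball (Hline r t) R0 I HL3 (Rlt_le _ _ HR) Hball) as Hd3.
  rewrite (line_dist_Hline r t (0, 0)) in Hd3.
  replace (cos t * fst (0, 0) + sin t * snd (0, 0) - r) with (- r) in Hd3
    by (simpl; ring).
  rewrite Rabs_Ropp, (Rabs_pos_eq r Hr), <- Heq in Hd3.
  replace (r - line_dist H1 (0, 0))
    with ((line_dist H1 I - line_dist H1 (0, 0)) - (line_dist H1 I - r)) by ring.
  eapply Rle_trans; [apply Rabs_triang |].
  rewrite Rabs_Ropp; lra.
Qed.

(* A set contained in a single rectangle has outer measure at most the
   rectangle's area: cover it by the rectangle followed by empty ones. *)
Lemma outer_measure_le_rect (S : R -> R -> Prop) (Q : rect) :
  (forall r t, S r t -> in_rect Q r t) -> outer_measure_le S (rect_area Q).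
Proof.
  intros HS eps Heps.
  exists (fun k => match k with O => Q | S _ => mkRect 0 0 0 0 end); split.
  - intros r t Hrt; exists O; exact (HS r t Hrt).
  - assert (Hempty : rect_area (mkRect 0 0 0 0) = 0)
      by (unfold rect_area; simpl; rewrite Rminus_0_r, Rmax_left by lra; ring).
    induction n as [| n IH]; simpl; [lra |].
    rewrite Hempty; lra.
Qed.

Theorem lemma3p3 :
  exists eta : R, 0 < eta /\
    forall (H1 H2 : line) (R0 : R),
      is_line H1 -> is_line H2 -> not_parallel H1 H2 ->
      0 < R0 ->
      G_le H1 H2 R0 (eta * R0).
Proof.
  exists 8; split; [lra |].
  intros H1 H2 R0 HL1 _ _ HR.
  unfold G_le; set (d0 := line_dist H1 (0, 0)).
  pose proof PI_RGT_0 as Hpi.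
  (* All admissible parameters lie in [d0 - 2R, d0 + 2R] × [0, 2π]. *)
  replace (PI * (8 * R0)) with (rect_area (mkRect (d0 - 2 * R0) (d0 + 2 * R0) 0 (2 * PI)))
    by (unfold rect_area; simpl; rewrite !Rmax_right by lra; ring).
  apply outer_measure_le_rect.
  intros r t Hrt.
  pose proof (G_set_band H1 H2 R0 r t HL1 HR Hrt) as Hband.
  destruct Hrt as (_ & Ht & _).
  unfold in_rect; simpl.
  fold d0 in Hband.
  pose proof (Rle_abs (r - d0)) as Hup.
  pose proof (Rle_abs (- (r - d0))) as Hlow; rewrite Rabs_Ropp in Hlow.
  lra.
Qed.
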